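(* Let $\varphi$ be an INF sentence over $\Sigma$. Then the symbolic INF propagator $S_\varphi$ describes the INF propagator $O_\varphi$: for every four-valued symbolic $\Sigma$-structure $\tilde\Phi$ over $\Sigma_s$ and every two-valued $\Sigma_s$-structure $E$, $S_\varphi(\tilde\Phi)(E)=O_\varphi(\tilde\Phi(E))$.
   Context: Vocabularies are finite sets of predicate symbols. Four-valued structures: truth values $\mathbf{t},\mathbf{f},\mathbf{u},\mathbf{i}$; inverse swaps $\mathbf{t},\mathbf{f}$ and fixes $\mathbf{u},\mathbf{i}$; truth order $\mathbf{f}\le_t\mathbf{u}\le_t\mathbf{t}$, $\mathbf{f}\le_t\mathbf{i}\le_t\mathbf{t}$; precision order $\mathbf{u}\le_p\mathbf{t}\le_p\mathbf{i}$, $\mathbf{u}\le_p\mathbf{f}\le_p\mathbf{i}$. A four-valued $\Sigma$-structure $\tilde I$ has domain $D$ and gives each $P/n\in\Sigma$ a map $D^n\to\{\mathbf{t},\mathbf{f},\mathbf{u},\mathbf{i}\}$. Formula values: atoms via the structure, $\neg$ by inverse, $\wedge,\forall$ by $\le_t$-glb, $\vee,\exists$ by $\le_t$-lub. Encoding: $\mathrm{tf}(\Sigma)=\{P^{ct}/n,P^{cf}/n\mid P/n\in\Sigma\}$; $\mathrm{tf}(\tilde I)$ is the two-valued $\mathrm{tf}(\Sigma)$-structure with $(P^{ct})^{\mathrm{tf}(\tilde I)}=\{\overline{d}\mid P^{\tilde I}(\overline{d})\ge_p\mathbf{t}\}$ and $(P^{cf})^{\mathrm{tf}(\tilde I)}=\{\overline{d}\mid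 P^{\tilde I}(\overline{d})\ge_p\mathbf{f}\}$; $\tilde I\mapsto\mathrm{tf}(\tilde I)$ is a bijection onto two-valued $\mathrm{tf}(\Sigma)$-structures with domain $D$. Formulas $\varphi^{ct},\varphi^{cf}$ over $\mathrm{tf}(\Sigma)$: $(P(\overline{x}))^{ct}=P^{ct}(\overline{x})$, $(P(\overline{x}))^{cf}=P^{cf}(\overline{x})$; $(\neg\varphi)^{ct}=\varphi^{cf}$, $(\neg\varphi)^{cf}=\varphi^{ct}$; $(\varphi\wedge\psi)^{ct}=\varphi^{ct}\wedge\psi^{ct}$, $(\varphi\wedge\psi)^{cf}=\varphi^{cf}\vee\psi^{cf}$; $(\varphi\vee\psi)^{ct}=\varphi^{ct}\vee\psi^{ct}$, $(\varphi\vee\psi)^{cf}=\varphi^{cf}\wedge\psi^{cf}$; $(\forall x\varphi)^{ct}=\forall x\varphi^{ct}$, $(\forall x\varphi)^{cf}=\exists x\varphi^{cf}$; $(\exists x\varphi)^{ct}=\exists x\varphi^{ct}$, $(\exists x\varphi)^{cf}=\forall x\varphi^{cf}$. Symbolic structures: a symbolic two-valued $\Sigma'$-structure $\Phi$ over $\Sigma_s$ assigns each $P/n\in\Sigma'$ a query $\{(x_1,\dots,x_n)\mid\chi\}$ with $\chi$ a formula over $\Sigma_s$; for a $\Sigma_s$-structure $E$, $\Phi(E)$ is the $\Sigma'$-structure with the same domain and $P^{\Phi(E)}=\{\overline{d}\mid E[\overline{x}/\overline{d}]\models\chi\}$; for a formula $\varphi$ over $\Sigma'$, $\Phi(\varphi)$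 replaces each atom $P(\overline{y})$ by $\chi[\overline{x}/\overline{y}]$. A four-valued symbolic $\Sigma$-structure over $\Sigma_s$ is a symbolic two-valued $\mathrm{tf}(\Sigma)$-structure $\tilde\Phi$ over $\Sigma_s$; $\tilde\Phi(E)$ is identified with the four-valued $\Sigma$-structure $\tilde I$ with $\mathrm{tf}(\tilde I)=\tilde\Phi(E)$. The union of queries of equal arity is $\{\overline{x}\mid\psi\}\cup\{\overline{y}\mid\chi\}=\{\overline{z}\mid\psi[\overline{x}/\overline{z}]\vee\chi[\overline{y}/\overline{z}]\}$ with $\overline{z}$ fresh. INF sentences: $\forall\overline{x}(\psi\supset L[\overline{x}])$ with $\psi$ having free variables among $\overline{x}$, $L$ one of $P(\overline{x}),\neg P(\overline{x})$. INF propagator $O_\varphi$: $O_\varphi(\tilde I)$ agrees with $\tilde I$ except $P^{O_\varphi(\tilde I)}(\overline{d})=\mathrm{lub}_{\le_p}\{\mathbf{t},P^{\tilde I}(\overline{d})\}$ (resp. with $\mathbf{f}$ for negative $L$) whenever $\tilde I[\overline{x}/\overline{d}](\psi)\ge_p\mathbf{t}$. Symbolic INF propagator: for $\varphi=\forall\overline{x}(\psi\supset P(\overline{x}))$, $S_\varphi(\tilde\Phi)$ assigns $(P^{ct})^{\tilde\Phi}\cup\{\overline{x}\mid\tilde\Phi(\psi^{ct})\}$ to $P^{ct}$ and the same queries as $\tilde\Phi$ to all other symbols; for $\varphi=\forall\overline{x}(\psi\supset\neg P(\overline{x}))$, it assigns $(P^{cf})^{\tilde\Phi}\cup\{\overline{x}\mid\tilde\Phi(\psi^{ct})\}$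 to $P^{cf}$ and copies the rest. *)

From mathcomp Require Import all_boot.
From Stdlib Require Import ClassicalEpsilon.
Set Implicit Arguments.
Unset Strict Implicit.
Unset Printing Implicit Defensive.

Record vocab := Vocab { sym : finType; ar : sym -> nat }.

Definition var := nat.

Inductive form (V : vocab) : Type :=
| Atom (P : sym V) (xs : (ar P).-tuple var)
| Neg (f : form V)
| And (f g : form V)
| Or (f g : form V)
| All (x : var) (f : form V)
| Ex (x : var) (f : form V).
Arguments Atom {V} P xs.
Arguments Neg {V} f.
Arguments And {V} f g.
Arguments Or {V} f g.
Arguments All {V} x f.
Arguments Ex {V} x f.

Fixpoint fv V (f : form V) : seq var :=
  match f with
  | Atom _ xs => tval xs
  | Neg g => fv g
  | And g h => fv g ++ fv h
  | Or g h => fv g ++ fv h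
  | All x g => [seq y <- fv g | y != x]
  | Ex x g => [seq y <- fv g | y != x]
  end.

Definition upd D (a : var -> D) (x : var) (d : D) : var -> D :=
  fun y => if y == x then d else a y.

(* simultaneous update a[x1/d1,...,xn/dn]; for a repeated variable the
   first occurrence wins (consistent with [qsubst] below). *)
Fixpoint upds D (a : var -> D) (xs : seq var) (ds : seq D) : var -> D :=
  match xs, ds with
  | x :: xs', d :: ds' => upd (upds a xs' ds') x d
  | _, _ => a
  end.

Definition struct2 (V : vocab) (D : Type) := forall P : sym V, (ar P).-tuple D -> Prop.

Fixpoint sat V D (E : struct2 V D) (a : var -> D) (f : form V) : Prop :=
  match f with
  | Atom P xs => E P (map_tuple a xs)
  | Neg g => ~ sat E a g
  | And g h => sat E a g /\ sat E a h
  | Or g h => sat E a g \/ sat E a h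
  | All x g => forall d : D, sat E (upd a x d) g
  | Ex x g => exists d : D, sat E (upd a x d) g
  end.

Inductive FV := Tt | Ff | Uu | Ii.

Definition inv (v : FV) : FV :=
  match v with Tt => Ff | Ff => Tt | Uu => Uu | Ii => Ii end.

Definition le_t (v w : FV) : Prop := v = w \/ v = Ff \/ w = Tt.
Definition le_p (v w : FV) : Prop := v = w \/ v = Uu \/ w = Ii.

Definition is_glb (le : FV -> FV -> Prop) (S : FV -> Prop) (v : FV) : Prop :=
  (forall w, S w -> le v w) /\ (forall v', (forall w, S w -> le v' w) -> le v' v).
Definition is_lub (le : FV -> FV -> Prop) (S : FV -> Prop) (v : FV) : Prop :=
  (forall w, S w -> le w v) /\ (forall v', (forall w, S w -> le w v') -> le v v').

Definition glb_t (S : FV -> Prop) : FV := epsilon (inhabits Tt) (is_glb le_t S).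
Definition lub_t (S : FV -> Prop) : FV := epsilon (inhabits Tt) (is_lub le_t S).
Definition lub_p (S : FV -> Prop) : FV := epsilon (inhabits Tt) (is_lub le_p S).

Definition struct4 (V : vocab) (D : Type) := forall P : sym V, (ar P).-tuple D -> FV.

Fixpoint fval V D (I : struct4 V D) (a : var -> D) (f : form V) : FV :=
  match f with
  | Atom P xs => I P (map_tuple a xs)
  | Neg g => inv (fval I a g)
  | And g h => glb_t (fun w => w = fval I a g \/ w = fval I a h)
  | Or g h => lub_t (fun w => w = fval I a g \/ w = fval I a h)
  | All x g => glb_t (fun w => exists d : D, w = fval I (upd a x d) g)
  | Ex x g => lub_t (fun w => exists d : D, w = fval I (upd a x d) g)
  end.

(* The encoding tf: P^ct = inl P, P^cf = inr P.                         *)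
Definition tf (V : vocab) : vocab :=
  @Vocab (sym V + sym V)%type
         (fun s => match s with inl P => ar P | inr P => ar P end).

Definition tf_struct V D (I : struct4 V D) : struct2 (tf V) D :=
  fun s => match s as s0 return (@ar (tf V) s0).-tuple D -> Prop with
           | inl P => fun ds => le_p Tt (I P ds)
           | inr P => fun ds => le_p Ff (I P ds)
           end.

Fixpoint ct V (f : form V) : form (tf V) :=
  match f with
  | Atom P xs => @Atom (tf V) (inl P) xs
  | Neg g => cf g
  | And g h => And (ct g) (ct h)
  | Or g h => Or (ct g) (ct h)
  | All x g => All x (ct g)
  | Ex x g => Ex x (ct g)
  end
with cf V (f : form V) : form (tf V) :=
  match f with
  | Atom P xs => @Atom (tf V) (inr P) xs
  | Neg g => ct g
  | And g h => Or (cf g) (cf h)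
  | Or g h => And (cf g) (cf h)
  | All x g => Ex x (cf g)
  | Ex x g => All x (cf g)
  end.

Definition fresh (l : seq var) : var := (foldr maxn 0 l).+1.

Fixpoint rename V (sigma : var -> var) (f : form V) : form V :=
  match f with
  | Atom P xs => Atom P (map_tuple sigma xs)
  | Neg g => Neg (rename sigma g)
  | And g h => And (rename sigma g) (rename sigma h)
  | Or g h => Or (rename sigma g) (rename sigma h)
  | All x g =>
      let y := fresh (map sigma (fv (All x g))) in
      All y (rename (fun z => if z == x then y else sigma z) g)
  | Ex x g =>
      let y := fresh (map sigma (fv (Ex x g))) in
      Ex y (rename (fun z => if z == x then y else sigma z) g)
  end.

(* the simultaneous substitution [xs/ys] (first occurrence wins) *)
Definition qsubst (xs ys : seq var) : var -> var :=
  fun z => if z \in xs then nth z ys (index z xs) else z.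

Record query (Vs : vocab) (n : nat) := Query { qvars : n.-tuple var; qbody : form Vs }.
Arguments Query {Vs n} qvars qbody.

Definition symstruct (V' Vs : vocab) := forall P : sym V', query Vs (ar P).

Definition symstruct_wf V' Vs (Phi : symstruct V' Vs) : Prop :=
  forall P, {subset fv (qbody (Phi P)) <= tval (qvars (Phi P))}.

Definition seval V' Vs D (Phi : symstruct V' Vs) (E : struct2 Vs D) : struct2 V' D :=
  fun P ds => forall a : var -> D,
      sat E (upds a (tval (qvars (Phi P))) (tval ds)) (qbody (Phi P)).

Fixpoint sapply V' Vs (Phi : symstruct V' Vs) (f : form V') : form Vs :=
  match f with
  | Atom P ys => rename (qsubst (tval (qvars (Phi P))) (tval ys)) (qbody (Phi P))
  | Neg g => Neg (sapply Phi g)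
  | And g h => And (sapply Phi g) (sapply Phi h)
  | Or g h => Or (sapply Phi g) (sapply Phi h)
  | All x g => All x (sapply Phi g)
  | Ex x g => Ex x (sapply Phi g)
  end.

Definition qunion Vs n (q1 q2 : query Vs n) : query Vs n :=
  let m := fresh (tval (qvars q1) ++ tval (qvars q2) ++ fv (qbody q1) ++ fv (qbody q2)) in
  let zs : n.-tuple var := [tuple m + val i | i < n] in
  Query zs (Or (rename (qsubst (tval (qvars q1)) (tval zs)) (qbody q1))
               (rename (qsubst (tval (qvars q2)) (tval zs)) (qbody q2))).

(* INF sentences  forall x (psi -> L[x]),  L = P(x) (pos) or ~P(x). *)
Record INF (V : vocab) := MkINF {
  inf_P : sym V;
  inf_pos : bool;
  inf_xs : (ar inf_P).-tuple var;
  inf_psi : form V }.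

Definition INF_sentence V (phi : INF V) : Prop :=
  uniq (tval (inf_xs phi)) /\ {subset fv (inf_psi phi) <= tval (inf_xs phi)}.

Definition O_inf V D (phi : INF V) (I : struct4 V D) : struct4 V D :=
  fun Q ds =>
    if excluded_middle_informative
         (Q = inf_P phi /\
          forall a : var -> D,
            le_p Tt (fval I (upds a (tval (inf_xs phi)) (tval ds)) (inf_psi phi)))
    then lub_p (fun w => w = (if inf_pos phi then Tt else Ff) \/ w = I Q ds)
    else I Q ds.

Definition S_inf V Vs (phi : INF V) (Phi : symstruct (tf V) Vs) : symstruct (tf V) Vs :=
  let P := inf_P phi in
  let q : query Vs (ar P) := Query (inf_xs phi) (sapply Phi (ct (inf_psi phi))) in
  if inf_pos phi
  then dfwith (T := fun s => query Vs (@ar (tf V) s)) Phi (i := inl P) (qunion (Phi (inl P)) q)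
  else dfwith (T := fun s => query Vs (@ar (tf V) s)) Phi (i := inr P) (qunion (Phi (inr P)) q).

(* A four-valued truth value is the pair of bits "at least true" and "at least false", and this
   pair is exactly what [tf] records. The truth-order glb and lub act bitwise (the true bit of a
   glb is the conjunction of the true bits, its false bit the disjunction of the false bits, and
   dually for the lub), so the true bit of the value of psi in I is the two-valued truth of
   psi^ct in tf(I). The precision lub with t (resp. f) in O_phi only raises the true (resp. false)
   bit of P, so tf(O_phi(I)) enlarges P^ct (resp. P^cf) by the tuples satisfying psi^ct. Since
   Phi(E) satisfies a formula iff E satisfies its translation under Phi, this enlargement is
   precisely the union query with which S_phi updates Phi. *)

From mathcomp Require Import all_boot.
From Stdlib Require Import ClassicalEpsilon Classical FunctionalExtensionality PropExtensionality.
Set Implicit Arguments.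
Unset Strict Implicit.

Definition told_t (v : FV) : bool := match v with Tt | Ii => true | _ => false end.
Definition told_f (v : FV) : bool := match v with Ff | Ii => true | _ => false end.

Definition of_told (t f : bool) : FV :=
  match t, f with
  | true, true => Ii | true, false => Tt | false, true => Ff | false, false => Uu
  end.

Lemma told_t_of t f : told_t (of_told t f) = t. Proof. by case: t; case: f. Qed.
Lemma told_f_of t f : told_f (of_told t f) = f. Proof. by case: t; case: f. Qed.

Lemma le_pTt v : le_p Tt v <-> told_t v.
Proof. by case: v; rewrite /le_p; split=> //; intuition discriminate. Qed.

Lemma le_pFf v : le_p Ff v <-> told_f v.
Proof. by case: v; rewrite /le_p; split=> //; intuition discriminate. Qed.

Lemma le_tE v w : le_t v w <-> (told_t v ==> told_t w) && (told_f w ==> told_f v).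
Proof. by case: v; case: w; rewrite /le_t; split=> //; intuition discriminate. Qed.

Lemma le_pE v w : le_p v w <-> (told_t v ==> told_t w) && (told_f v ==> told_f w).
Proof. by case: v; case: w; rewrite /le_p; split=> //; intuition discriminate. Qed.

Lemma le_t_anti v w : le_t v w -> le_t w v -> v = w.
Proof. by rewrite !le_tE; case: v; case: w. Qed.

Lemma le_p_anti v w : le_p v w -> le_p w v -> v = w.
Proof. by rewrite !le_pE; case: v; case: w. Qed.

Section Extrema.
Variable le : FV -> FV -> Prop.
Hypothesis le_anti : forall v w, le v w -> le w v -> v = w.

Lemma is_glb_unique S v w : is_glb le S v -> is_glb le S w -> v = w.
Proof. by move=> [lbv glbv] [lbw glbw]; apply: le_anti; [apply: glbw | apply: glbv]. Qed.

Lemma is_lub_unique S v w : is_lub le S v -> is_lub le S w -> v = w.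
Proof. by move=> [ubv lubv] [ubw lubw]; apply: le_anti; [apply: lubv | apply: lubw]. Qed.

Lemma epsilon_is_glb S v : is_glb le S v -> epsilon (inhabits Tt) (is_glb le S) = v.
Proof. by move=> Sv; apply: is_glb_unique (epsilon_spec _ _ (ex_intro _ v Sv)) Sv. Qed.

Lemma epsilon_is_lub S v : is_lub le S v -> epsilon (inhabits Tt) (is_lub le S) = v.
Proof. by move=> Sv; apply: is_lub_unique (epsilon_spec _ _ (ex_intro _ v Sv)) Sv. Qed.

End Extrema.

Definition asbool (P : Prop) : bool := if excluded_middle_informative P then true else false.

Lemma asboolP (P : Prop) : reflect P (asbool P).
Proof. by rewrite /asbool; case: excluded_middle_informative => H; constructor. Qed.

Lemma glb_tE S :
  glb_t S = of_told (asbool (forall w, S w -> told_t w)) (asbool (exists2 w, S w & told_f w)).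
Proof.
apply: epsilon_is_glb le_t_anti _ _ _; split=> [w Sw | v lb_v];
  apply/le_tE; rewrite told_t_of told_f_of; apply/andP; split; apply/implyP.
- by move/asboolP; apply.
- by move=> fw; apply/asboolP; exists w.
- by move=> tv; apply/asboolP=> w /lb_v /le_tE /andP[/implyP ->].
- by case/asboolP=> w /lb_v /le_tE /andP[_ /implyP H] /H.
Qed.

Lemma lub_tE S :
  lub_t S = of_told (asbool (exists2 w, S w & told_t w)) (asbool (forall w, S w -> told_f w)).
Proof.
apply: epsilon_is_lub le_t_anti _ _ _; split=> [w Sw | v ub_v];
  apply/le_tE; rewrite told_t_of told_f_of; apply/andP; split; apply/implyP.
- by move=> tw; apply/asboolP; exists w.
- by move/asboolP; apply.
- by case/asboolP=> w /ub_v /le_tE /andP[/implyP H _] /H.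
- by move=> fv; apply/asboolP=> w /ub_v /le_tE /andP[_ /implyP ->].
Qed.

Lemma lub_pE S :
  lub_p S = of_told (asbool (exists2 w, S w & told_t w)) (asbool (exists2 w, S w & told_f w)).
Proof.
apply: epsilon_is_lub le_p_anti _ _ _; split=> [w Sw | v ub_v];
  apply/le_pE; rewrite told_t_of told_f_of; apply/andP; split; apply/implyP.
- by move=> tw; apply/asboolP; exists w.
- by move=> fw; apply/asboolP; exists w.
- by case/asboolP=> w /ub_v /le_pE /andP[/implyP H _] /H.
- by case/asboolP=> w /ub_v /le_pE /andP[_ /implyP H] /H.
Qed.

Lemma lub_p2E v w : lub_p (fun x => x = v \/ x = w) =
  of_told (told_t v || told_t w) (told_f v || told_f w).
Proof.
rewrite lub_pE; congr of_told; apply/asboolP/orP.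
- by case=> x [->|->] ->; [left | right].
- by case=> H; [exists v; [left|] | exists w; [right|]].
- by case=> x [->|->] ->; [left | right].
- by case=> H; [exists v; [left|] | exists w; [right|]].
Qed.

Lemma sat_tf_ct_cf V D (I : struct4 V D) (f : form V) a :
  (sat (tf_struct I) a (ct f) <-> told_t (fval I a f)) /\
  (sat (tf_struct I) a (cf f) <-> told_f (fval I a f)).
Proof.
elim: f a => [P xs|g IH|g IHg h IHh|g IHg h IHh|x g IH|x g IH] a /=.
- by rewrite le_pTt le_pFf.
- by case: (IH a); case: (fval I a g).
- rewrite glb_tE told_t_of told_f_of; case: (IHg a) (IHh a) => [-> ->] [-> ->].
  split; split.
  + by case=> tg th; apply/asboolP=> w [->|->].
  + by move/asboolP=> tgh; split; apply: tgh; [left | right].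
  + by case=> H; apply/asboolP; [exists (fval I a g); [left|] | exists (fval I a h); [right|]].
  + by case/asboolP=> w [->|->] fw; [left | right].
- rewrite lub_tE told_t_of told_f_of; case: (IHg a) (IHh a) => [-> ->] [-> ->].
  split; split.
  + by case=> H; apply/asboolP; [exists (fval I a g); [left|] | exists (fval I a h); [right|]].
  + by case/asboolP=> w [->|->] tw; [left | right].
  + by case=> fg fh; apply/asboolP=> w [->|->].
  + by move/asboolP=> fgh; split; apply: fgh; [left | right].
- rewrite glb_tE told_t_of told_f_of; split; split.
  + by move=> H; apply/asboolP=> _ [d ->]; apply/(proj1 (IH _)).
  + by move/asboolP=> H d; apply/(proj1 (IH _))/H; exists d.
  + by case=> d /(proj2 (IH _)) fd; apply/asboolP; exists (fval I (upd a x d) g); first exists d.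
  + by case/asboolP=> _ [d ->] /(proj2 (IH _)); exists d.
- rewrite lub_tE told_t_of told_f_of; split; split.
  + by case=> d /(proj1 (IH _)) td; apply/asboolP; exists (fval I (upd a x d) g); first exists d.
  + by case/asboolP=> _ [d ->] /(proj1 (IH _)); exists d.
  + by move=> H; apply/asboolP=> _ [d ->]; apply/(proj2 (IH _)).
  + by move/asboolP=> H d; apply/(proj2 (IH _))/H; exists d.
Qed.

Lemma sat_tf_ct V D (I : struct4 V D) (f : form V) a :
  sat (tf_struct I) a (ct f) <-> le_p Tt (fval I a f).
Proof. by rewrite le_pTt; case: (sat_tf_ct_cf I f a). Qed.

Lemma fresh_gt (l : seq var) x : x \in l -> x < fresh l.
Proof.
rewrite /fresh ltnS; elim: l => //= y l IH; rewrite inE => /orP[/eqP->|/IH H].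
  by rewrite leq_maxl.
by rewrite (leq_trans H) ?leq_maxr.
Qed.

Lemma fresh_neq (l : seq var) x : x \in l -> x != fresh l.
Proof. by move/fresh_gt; rewrite ltn_neqAle => /andP[]. Qed.

Lemma eq_in_upd D (a b : var -> D) x d (l : seq var) :
  {in [seq y <- l | y != x], a =1 b} -> {in l, upd a x d =1 upd b x d}.
Proof.
move=> ab z zl; rewrite /upd; case: eqP => // /eqP zx.
by apply: ab; rewrite mem_filter zx.
Qed.

Lemma eq_in_sat V D (E : struct2 V D) (f : form V) a b :
  {in fv f, a =1 b} -> sat E a f <-> sat E b f.
Proof.
elim: f a b => [P xs|g IH|g IHg h IHh|g IHg h IHh|x g IH|x g IH] a b /= ab.
- by have -> : map_tuple a xs = map_tuple b xs by apply: val_inj; apply/eq_in_map.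
- by rewrite (IH a b ab).
- rewrite (IHg a b) ?(IHh a b) // => z zf; apply: ab; by rewrite mem_cat zf ?orbT.
- rewrite (IHg a b) ?(IHh a b) // => z zf; apply: ab; by rewrite mem_cat zf ?orbT.
- by split=> H d; apply/(IH _ _ (eq_in_upd d ab)).
- by split=> -[d H]; exists d; apply/(IH _ _ (eq_in_upd d ab)).
Qed.

(* The fresh binder [y] is not the image of any other free variable of the body. *)
Lemma upd_rename_binder D (a : var -> D) (sigma : var -> var) x (g : seq var) d :
  let y := fresh (map sigma [seq z <- g | z != x]) in
  {in g, upd a y d \o (fun z => if z == x then y else sigma z) =1 upd (a \o sigma) x d}.
Proof.
move=> y z zg; rewrite /upd /=; case: (z =P x) => [_|/eqP zx]; first by rewrite eqxx.
case: eqP => // sz; have /fresh_neq : sigma z \in map sigma [seq z <- g | z != x].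
  by apply: map_f; rewrite mem_filter zx.
by rewrite sz eqxx.
Qed.

Lemma sat_rename V D (E : struct2 V D) (f : form V) sigma a :
  sat E a (rename sigma f) <-> sat E (a \o sigma) f.
Proof.
elim: f sigma a => [P xs|g IH|g IHg h IHh|g IHg h IHh|x g IH|x g IH] sigma a /=.
- by have -> : map_tuple a (map_tuple sigma xs) = map_tuple (a \o sigma) xs
    by apply: val_inj; rewrite /= map_comp.
- by rewrite IH.
- by rewrite IHg IHh.
- by rewrite IHg IHh.
- have K d : sat E (upd a _ d) (rename _ g) <-> _ := iff_trans (IH _ _)
    (eq_in_sat E (upd_rename_binder a sigma x (g := fv g) d)).
  by split=> H d; apply/K.
- have K d : sat E (upd a _ d) (rename _ g) <-> _ := iff_trans (IH _ _)
    (eq_in_sat E (upd_rename_binder a sigma x (g := fv g) d)).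
  by split=> -[d /K H]; exists d.
Qed.

Lemma fv_rename V (f : form V) sigma : {subset fv (rename sigma f) <= map sigma (fv f)}.
Proof.
elim: f sigma => [P xs|g IH|g IHg h IHh|g IHg h IHh|x g IH|x g IH] sigma /=.
- by [].
- exact: IH.
- by move=> z; rewrite map_cat !mem_cat => /orP[/IHg|/IHh] ->; rewrite ?orbT.
- by move=> z; rewrite map_cat !mem_cat => /orP[/IHg|/IHh] ->; rewrite ?orbT.
- move=> z; rewrite mem_filter => /andP[zy /IH /mapP[w wg zw]]; subst z; move: zy => /=.
  by case: ifP => [_|/negbT wx _]; [rewrite eqxx | apply: map_f; rewrite mem_filter wx].
- move=> z; rewrite mem_filter => /andP[zy /IH /mapP[w wg zw]]; subst z; move: zy => /=.
  by case: ifP => [_|/negbT wx _]; [rewrite eqxx | apply: map_f; rewrite mem_filter wx].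
Qed.

Lemma fv_ct_cf V (f : form V) : fv (ct f) = fv f /\ fv (cf f) = fv f.
Proof.
elim: f => [P xs|g [g1 g2]|g [g1 g2] h [h1 h2]|g [g1 g2] h [h1 h2]|x g [g1 g2]|x g [g1 g2]] /=;
  by rewrite ?g1 ?g2 ?h1 ?h2.
Qed.

Lemma upds_nth D (a : var -> D) xs ds z : z \in xs -> size xs = size ds ->
  upds a xs ds z = nth (a z) ds (index z xs).
Proof.
elim: xs ds => [|x xs IH] [|d ds] //= zin [] sz.
rewrite /upd; case: (z =P x) => [->|/eqP zx]; first by rewrite eqxx.
rewrite eq_sym (negbTE zx) /=; apply: IH => //.
by move: zin; rewrite inE (negbTE zx).
Qed.

Lemma upds_in D (a b : var -> D) xs ds z : z \in xs -> size xs = size ds ->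
  upds a xs ds z = upds b xs ds z.
Proof.
move=> zin sz; rewrite !upds_nth //; apply: set_nth_default.
by rewrite -sz index_mem.
Qed.

Lemma upds_qsubst D (a b : var -> D) xs zs ds z : uniq zs -> z \in xs ->
  size xs = size zs -> size zs = size ds ->
  upds a zs ds (qsubst xs zs z) = upds b xs ds z.
Proof.
move=> uz zin s1 s2; rewrite /qsubst zin.
have ki : index z xs < size zs by rewrite -s1 index_mem.
rewrite upds_nth ?mem_nth // index_uniq // upds_nth //; last by rewrite s1.
by apply: set_nth_default; rewrite -s2.
Qed.

Lemma sat_upds_in Vs D (E : struct2 Vs D) (f : form Vs) xs ds a b :
  {subset fv f <= xs} -> size xs = size ds ->
  sat E (upds a xs ds) f <-> sat E (upds b xs ds) f.
Proof. by move=> fxs s; apply: eq_in_sat => z /fxs zxs; apply: upds_in. Qed.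

Lemma sat_rename_qsubst Vs D (E : struct2 Vs D) (f : form Vs) xs zs ds a b :
  {subset fv f <= xs} -> uniq zs -> size xs = size zs -> size zs = size ds ->
  sat E (upds a zs ds) (rename (qsubst xs zs) f) <-> sat E (upds b xs ds) f.
Proof.
move=> fxs uz s1 s2; rewrite sat_rename; apply: eq_in_sat => z /fxs zxs /=.
exact: upds_qsubst.
Qed.

Section SymbolicStructure.
Variables (V' Vs : vocab) (Phi : symstruct V' Vs).
Hypothesis Phi_wf : symstruct_wf Phi.

Lemma index_qvars_lt P z : z \in fv (qbody (Phi P)) -> index z (qvars (Phi P)) < ar P.
Proof. by move/Phi_wf; rewrite -index_mem size_tuple. Qed.

Lemma fv_sapply (f : form V') : {subset fv (sapply Phi f) <= fv f}.
Proof.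
elim: f => [P ys|g IH|g IHg h IHh|g IHg h IHh|x g IH|x g IH] /=.
- move=> z /fv_rename /mapP[w wf ->]; rewrite /qsubst (Phi_wf wf) mem_nth //.
  by rewrite size_tuple index_qvars_lt.
- exact: IH.
- by move=> z; rewrite !mem_cat => /orP[/IHg|/IHh] ->; rewrite ?orbT.
- by move=> z; rewrite !mem_cat => /orP[/IHg|/IHh] ->; rewrite ?orbT.
- by move=> z; rewrite !mem_filter => /andP[-> /IH].
- by move=> z; rewrite !mem_filter => /andP[-> /IH].
Qed.

Variables (D : Type) (E : struct2 Vs D).

Lemma sat_sapply (f : form V') a : sat E a (sapply Phi f) <-> sat (seval Phi E) a f.
Proof.
elim: f a => [P ys|g IH|g IHg h IHh|g IHg h IHh|x g IH|x g IH] a /=.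
- have sz : size (qvars (Phi P)) = size (map a ys) by rewrite size_map !size_tuple.
  rewrite /seval sat_rename.
  have -> : sat E (a \o qsubst (qvars (Phi P)) ys) (qbody (Phi P)) <->
            sat E (upds a (qvars (Phi P)) (map a ys)) (qbody (Phi P)).
    apply: eq_in_sat => z zf /=; rewrite upds_nth ?Phi_wf // /qsubst Phi_wf //.
    by rewrite (nth_map z) // size_tuple index_qvars_lt.
  by split=> [H b | /(_ a)]; first apply/(sat_upds_in E a b (@Phi_wf P) sz).
- by rewrite IH.
- by rewrite IHg IHh.
- by rewrite IHg IHh.
- by split=> H d; apply/IH.
- by split=> -[d /IH H]; exists d.
Qed.

End SymbolicStructure.

Lemma sat_qunion Vs D (E : struct2 Vs D) n (q1 q2 : query Vs n) (ds : n.-tuple D) :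
  {subset fv (qbody q1) <= qvars q1} -> {subset fv (qbody q2) <= qvars q2} ->
  (forall a, sat E (upds a (qvars (qunion q1 q2)) ds) (qbody (qunion q1 q2))) <->
  (forall a, sat E (upds a (qvars q1) ds) (qbody q1)) \/
  (forall a, sat E (upds a (qvars q2) ds) (qbody q2)).
Proof.
move=> wf1 wf2; rewrite /qunion /=; set m := fresh _.
set zs : n.-tuple var := [tuple m + val i | i < n].
have zs_uniq : uniq zs by rewrite map_inj_uniq ?enum_uniq // => i j /addnI /val_inj.
have sz (q : query Vs n) : size (qvars q) = size zs /\ size zs = size ds by rewrite !size_tuple.
have K1 a b := sat_rename_qsubst E a b wf1 zs_uniq (proj1 (sz q1)) (proj2 (sz q1)).
have K2 a b := sat_rename_qsubst E a b wf2 zs_uniq (proj1 (sz q2)) (proj2 (sz q2)).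
split=> [H | [H|H] a]; [ | by left; apply/(K1 a a) | by right; apply/(K2 a a)].
(* The left side quantifies over all assignments; when there is none, both sides hold vacuously. *)
case: (classic (inhabited (var -> D))) => [[a0] | no_a]; last by left=> a; case: no_a.
by case: (H a0) => [H1 | H2]; [left | right] => a; [apply/(K1 a0) | apply/(K2 a0)].
Qed.

Lemma seval_dfwith_qunion V' Vs D (E : struct2 Vs D) (Phi : symstruct V' Vs) (h : sym V')
    (q : query Vs (ar h)) s (ds : (ar s).-tuple D) :
  symstruct_wf Phi -> {subset fv (qbody q) <= qvars q} ->
  seval (dfwith (T := fun s => query Vs (ar s)) Phi (qunion (Phi h) q)) E (P := s) ds <->
  seval Phi E ds \/ (h = s /\ forall a, sat E (upds a (qvars q) ds) (qbody q)).
Proof.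
move=> Phi_wf q_wf; rewrite /seval; case: (eqVneq h s) ds => [<- | hs] ds.
  rewrite dfwith_in (sat_qunion _ _ (@Phi_wf h) q_wf).
  by split=> -[H | H]; [left | right | left | right; case: H].
rewrite dfwith_out //; split=> [H | [// | [e _]]]; first by left.
by rewrite e eqxx in hs.
Qed.

Definition inf_head V (phi : INF V) : sym (tf V) :=
  if inf_pos phi then inl (inf_P phi) else inr (inf_P phi).

Lemma seval_S_inf V Vs D (E : struct2 Vs D) (phi : INF V) (Phi : symstruct (tf V) Vs) s
    (ds : (ar s).-tuple D) :
  symstruct_wf Phi -> {subset fv (inf_psi phi) <= inf_xs phi} ->
  seval (S_inf phi Phi) E ds <->
  seval Phi E ds \/
  (inf_head phi = s /\ forall a, sat E (upds a (inf_xs phi) ds) (sapply Phi (ct (inf_psi phi)))).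
Proof.
move=> Phi_wf psi_wf.
have q_wf : {subset fv (sapply Phi (ct (inf_psi phi))) <= inf_xs phi}.
  by move=> z /(fv_sapply Phi_wf); rewrite (proj1 (fv_ct_cf _)) => /psi_wf.
by rewrite /S_inf /inf_head; case: (inf_pos phi); apply: seval_dfwith_qunion.
Qed.

Lemma tf_O_inf V D (phi : INF V) (I : struct4 V D) s (ds : (ar s).-tuple D) :
  tf_struct (O_inf phi I) ds <->
  tf_struct I ds \/
  (inf_head phi = s /\ forall a, le_p Tt (fval I (upds a (inf_xs phi) ds) (inf_psi phi))).
Proof.
case: phi => P pos xs psi; rewrite /inf_head /=.
case: s ds => Q ds; rewrite /tf_struct /O_inf /= ?le_pTt ?le_pFf;
  case: excluded_middle_informative => [[QP C] | nC] /=.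
- subst Q; rewrite lub_p2E told_t_of.
  by case: pos; split=> [| [| [] ]] //=; [right | left].
- split=> [|[// | [hQ C]]]; first by left.
  by case: nC; split=> //; case: pos hQ => // -[].
- subst Q; rewrite lub_p2E told_f_of.
  by case: pos; split=> [| [| [] ]] //=; [left | right].
- split=> [|[// | [hQ C]]]; first by left.
  by case: nC; split=> //; case: pos hQ => // -[].
Qed.

Unset Implicit Arguments.
Set Strict Implicit.

Theorem proposition5p7 (V Vs : vocab) (phi : INF V) (Phi : symstruct (tf V) Vs)
  (D : Type) (E : struct2 Vs D) :
  INF_sentence phi -> symstruct_wf Phi ->
  forall I : struct4 V D,
    tf_struct I = seval Phi E ->
    tf_struct (O_inf phi I) = seval (S_inf phi Phi) E.
Proof.
move=> [_ psi_wf] Phi_wf I HI.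
have cond_iff ds :
    (forall a, le_p Tt (fval I (upds a (inf_xs phi) ds) (inf_psi phi))) <->
    (forall a, sat E (upds a (inf_xs phi) ds) (sapply Phi (ct (inf_psi phi)))).
  by split=> H a; move: (H a); rewrite -sat_tf_ct HI (sat_sapply Phi_wf).
apply: functional_extensionality_dep => s; apply: functional_extensionality => ds.
apply: propositional_extensionality.
by rewrite tf_O_inf seval_S_inf // cond_iff HI.
Qed.
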